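(* Let $G=(V,E)$ be a finite simple graph. Consider the procedure: set $\mathcal{F}\leftarrow\emptyset$; while $\mathrm{MFF}(G,\mathcal{F})$ is feasible, choose an optimal solution $x$ of $\mathrm{MFF}(G,\mathcal{F})$ and replace $\mathcal{F}$ by $\mathcal{F}\cup\{\{v\in V\colon x_v=1\}\}$; finally return $\mathcal{F}$. Then the returned collection $\mathcal{F}$ is the collection of all minimal forts of $G$.
   Context: $N(u)$ denotes the neighborhood of $u$. A fort of $G$ is a non-empty set $F\subseteq V$ such that no vertex $u\in V\setminus F$ has exactly one neighbor in $F$; it is minimal if no fort of $G$ is a proper subset of it. For a collection $\mathcal{F}$ of subsets of $V$, $\mathrm{MFF}(G,\mathcal{F})$ is the integer program: minimize $\sum_{v\in V}x_v$ subject to $\sum_{v\in V}x_v\geq1$; $x_u-x_v+\sum_{w\in N(u)\setminus\{v\}}x_w\geq0$ for all $v\in V$ and $u\in N(v)$; $\sum_{v\in F}x_v\leq|F|-1$ for all $F\in\mathcal{F}$; $x\in\{0,1\}^V$. *)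

From mathcomp Require Import all_boot all_order all_algebra.
Set Implicit Arguments. Unset Strict Implicit. Unset Printing Implicit Defensive.
Import GRing.Theory Num.Theory.

Definition simple_graph (V : finType) (adj : rel V) : Prop :=
  symmetric adj /\ irreflexive adj.

Definition nbhd (V : finType) (adj : rel V) (u : V) : {set V} :=
  [set w | adj u w].

Definition is_fort (V : finType) (adj : rel V) (F : {set V}) : Prop :=
  F != set0 /\ forall u, u \notin F -> #|nbhd adj u :&: F| != 1%N.

Definition is_minimal_fort (V : finType) (adj : rel V) (F : {set V}) : Prop :=
  is_fort adj F /\ forall F' : {set V}, F' \proper F -> ~ is_fort adj F'.

(* A 0/1 vector x in {0,1}^V is a boolean finite function; x_v as an integer. *)
Definition xval (V : finType) (x : {ffun V -> bool}) (v : V) : int :=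
  (nat_of_bool (x v))%:Z.

Definition MFF_feasible (V : finType) (adj : rel V) (FF : {set {set V}})
    (x : {ffun V -> bool}) : Prop :=
  [/\ (1 <= \sum_(v : V) xval x v)%R,
      (forall v u, u \in nbhd adj v ->
         (0 <= xval x u - xval x v
               + \sum_(w in nbhd adj u :\ v) xval x w)%R)
    & (forall F, F \in FF -> (\sum_(v in F) xval x v <= (#|F|%:Z - 1))%R)].

Definition MFF_optimal (V : finType) (adj : rel V) (FF : {set {set V}})
    (x : {ffun V -> bool}) : Prop :=
  MFF_feasible adj FF x /\
  forall y, MFF_feasible adj FF y ->
    (\sum_(v : V) xval x v <= \sum_(v : V) xval y v)%R.

Definition MFF_is_feasible (V : finType) (adj : rel V) (FF : {set {set V}}) :
  Prop := exists x, MFF_feasible adj FF x.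

Definition support (V : finType) (x : {ffun V -> bool}) : {set V} :=
  [set v | x v].

(* One iteration of the loop: MFF(G,FF) is feasible (implied by the existence
   of an optimal solution) and FF' = FF ∪ {supp x} for some optimal x. *)
Definition mff_step (V : finType) (adj : rel V) (FF FF' : {set {set V}}) :
  Prop :=
  exists x, MFF_optimal adj FF x /\ FF' = FF :|: [set support x].

Inductive mff_reachable (V : finType) (adj : rel V) :
    {set {set V}} -> Prop :=
| mff_start : mff_reachable adj set0
| mff_next FF FF' : mff_reachable adj FF -> mff_step adj FF FF' ->
    mff_reachable adj FF'.

(* Feasible points of MFF(G, FF) are exactly the indicator vectors of forts
   containing no member of FF: the neighbourhood constraint at (v, u) says that a
   vertex u outside the support cannot have v as its only neighbour in it.
   Minimising the size of the support therefore yields a minimal fort (a smaller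
   fort would give a cheaper feasible point), and it is new because its own
   constraint would be violated.  So each step adds one new minimal fort, the
   procedure terminates, and when MFF(G, FF) becomes infeasible no minimal fort
   is missing from FF, since its indicator vector would be feasible. *)
From Pilot Require Import Defs.
From mathcomp Require Import all_boot all_order all_algebra.
From mathcomp Require Import zify.
From Stdlib Require Import Wf_nat.
Import GRing.Theory Num.Theory.

(* ssralg's [support] (of a ring-valued function) shadows the one of Defs. *)
Local Notation supp := (@Defs.support _).

Local Open Scope ring_scope.

Lemma sum_xval_card (V : finType) (x : {ffun V -> bool}) (A : {set V}) :
  \sum_(v in A) xval x v = #|A :&: supp x|%:Z.
Proof.
rewrite (bigID x) /= [X in _ + X]big1 => [|v /andP[_ /negbTE]]; last first.
  by rewrite /xval => ->.
rewrite addr0 (eq_bigr (fun _ => 1)) => [|v /andP[_]]; last by rewrite /xval => ->.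
by rewrite (eq_bigl [in A :&: supp x]) ?sumr_const ?natz // => v; rewrite !inE.
Qed.

Lemma sum_xval_support (V : finType) (x : {ffun V -> bool}) :
  \sum_(v : V) xval x v = #|supp x|%:Z.
Proof. by rewrite -[supp x]setTI -sum_xval_card; apply: eq_bigl => v; rewrite inE. Qed.

Definition indicator {V : finType} (F : {set V}) : {ffun V -> bool} :=
  [ffun v => v \in F].

Lemma support_indicator (V : finType) (F : {set V}) : supp (indicator F) = F.
Proof. by apply/setP => v; rewrite !inE ffunE. Qed.

Section MinimalFortFormulation.

Set Implicit Arguments.
Unset Strict Implicit.

Variables (V : finType) (adj : rel V).
Hypothesis adj_sym : symmetric adj.
Implicit Types (FF : {set {set V}}) (F G : {set V}) (x : {ffun V -> bool}).

Lemma MFF_feasible_fort FF x : MFF_feasible adj FF x -> is_fort adj (supp x).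
Proof.
move=> [x_ge1 x_nbhd _]; split.
  by rewrite sum_xval_support in x_ge1; rewrite -card_gt0; lia.
move=> u u_out; apply/negP => /cards1P[v N_u].
have /setIP[] : v \in nbhd adj u :&: supp x by rewrite N_u set11.
rewrite !inE => uv xv.
have {N_u}only_v : (nbhd adj u :\ v) :&: supp x = set0.
  apply/setP => w; move/setP/(_ w): N_u; rewrite !inE -andbA => ->.
  by case: eqP.
have := x_nbhd v u; rewrite inE adj_sym uv sum_xval_card only_v cards0.
by move: u_out; rewrite /xval inE xv => /negbTE -> /(_ isT).
Qed.

Lemma MFF_feasible_sub_support FF x G :
  MFF_feasible adj FF x -> G \in FF -> ~~ (G \subset supp x).
Proof.
move=> [_ _ x_FF] GF; apply/negP => /setIidPl G_sub.
by have := x_FF G GF; rewrite sum_xval_card G_sub; lia.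
Qed.

Lemma fort_MFF_feasible FF F :
  is_fort adj F -> (forall G, G \in FF -> ~~ (G \subset F)) ->
  MFF_feasible adj FF (indicator F).
Proof.
move=> [F_n0 F_fort] FF_sub; split.
- by rewrite sum_xval_support support_indicator; rewrite -card_gt0 in F_n0; lia.
- move=> v u; rewrite inE => vu; rewrite sum_xval_card support_indicator /xval !ffunE.
  case uF: (u \in F); first by case: (v \in F).
  case vF: (v \in F) => //.
  have vN : v \in nbhd adj u :&: F by rewrite !inE -adj_sym vu vF.
  have -> : (nbhd adj u :\ v) :&: F = (nbhd adj u :&: F) :\ v.
    by apply/setP => w; rewrite !inE andbA.
  have := F_fort u; rewrite uF (cardsD1 v) vN => /(_ isT) /=; lia.
- move=> G GF; rewrite sum_xval_card support_indicator.
  have /ltn_leqif := subset_leqif_cards (subsetIl G F).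
  have -> : (G :&: F == G) = (G \subset F) by apply/eqP/idP => /setIidPl.
  by rewrite (negbTE (FF_sub G GF)) /= => ?; lia.
Qed.

Lemma MFF_optimal_minimal_fort FF x :
  MFF_optimal adj FF x -> is_minimal_fort adj (supp x).
Proof.
move=> [x_feas x_opt]; split; first exact: MFF_feasible_fort x_feas.
move=> F F_proper F_fort.
have F_feas : MFF_feasible adj FF (indicator F).
  apply: fort_MFF_feasible => // G GF; apply/negP => G_sub.
  have := MFF_feasible_sub_support x_feas GF.
  by rewrite (subset_trans G_sub (proper_sub F_proper)).
have := x_opt _ F_feas; rewrite !sum_xval_support support_indicator.
by have := proper_card F_proper; lia.
Qed.

Lemma MFF_optimal_support_notin FF x :
  MFF_optimal adj FF x -> supp x \notin FF.
Proof.
by move=> [x_feas _]; apply/negP => /(MFF_feasible_sub_support x_feas); rewrite subxx.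
Qed.

Lemma mff_step_card FF FF' : mff_step adj FF FF' -> #|FF'| = #|FF|.+1.
Proof.
by move=> [x [x_opt ->]]; rewrite setUC cardsU1 (MFF_optimal_support_notin x_opt).
Qed.

Lemma mff_step_wf : well_founded (fun FF' FF => mff_step adj FF FF').
Proof.
apply: (well_founded_lt_compat _ (fun FF => #|~: FF|)) => FF' FF /mff_step_card.
by have := cardsC FF; have := cardsC FF'; lia.
Qed.

Lemma mff_reachable_minimal_fort FF F :
  mff_reachable adj FF -> F \in FF -> is_minimal_fort adj F.
Proof.
move=> FF_reach; elim: FF_reach F => [|FF0 FF' _ IH [x [x_opt ->]]] F.
  by rewrite inE.
by rewrite !inE => /orP[/IH // | /eqP ->]; apply: MFF_optimal_minimal_fort x_opt.
Qed.

Lemma minimal_fort_MFF_feasible FF F :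
  (forall G, G \in FF -> is_fort adj G) -> is_minimal_fort adj F -> F \notin FF ->
  MFF_feasible adj FF (indicator F).
Proof.
move=> FF_forts [F_fort F_min] F_new; apply: fort_MFF_feasible => // G GF.
apply/negP => G_sub; apply: (F_min G) (FF_forts G GF).
by rewrite properEneq G_sub andbT; apply: contraNneq F_new => <-.
Qed.

End MinimalFortFormulation.

Theorem corollary6p3 (V : finType) (adj : rel V) :
  simple_graph adj ->
  (* the procedure terminates, whatever optimal solutions are chosen *)
  Acc (fun FF' FF => mff_step adj FF FF') (set0 : {set {set V}}) /\
  (* and whenever it stops, the returned collection is the set of minimal forts *)
  (forall FF : {set {set V}}, mff_reachable adj FF ->
     ~ MFF_is_feasible adj FF ->
     forall F : {set V}, F \in FF <-> is_minimal_fort adj F).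
Proof.
move=> [adj_sym _]; split; first exact: mff_step_wf.
move=> FF FF_reach FF_infeas F; split; first exact: mff_reachable_minimal_fort.
move=> F_min; apply/negPn/negP => F_new; apply: FF_infeas.
exists (indicator F); apply: minimal_fort_MFF_feasible => // G GF.
by have [] := mff_reachable_minimal_fort adj_sym FF_reach GF.
Qed.
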